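(* Let $\Gamma$ be a group. Then for every $j \ge 1$ the nilpotent quotients $P\mathcal{N}i(\Gamma)/\overline{C^j}(P\mathcal{N}i(\Gamma))$ and $\Gamma/C^j(\Gamma)$ are isomorphic, and the topology of $P\mathcal{N}i(\Gamma)$ can be defined by a metric.
   Context: For a group $\Gamma$, let $\mathcal{N}i$ be the family of all normal subgroups $N$ of $\Gamma$ with $\Gamma/N$ nilpotent (a directed family). Let $\mathcal{C}=\bigcap_{N\in\mathcal{N}i}N$; the group $\Gamma/\mathcal{C}$ carries the Hausdorff group topology for which the images of the members of $\mathcal{N}i$ form a basis of neighbourhoods of the identity, and its completion (with respect to the left uniformity) is the true pronilpotent completion $P\mathcal{N}i(\Gamma)$, identifiable with the inverse limit $\varprojlim_{N\in\mathcal{N}i}\Gamma/N$. The lower central series is $C^1(\Gamma)=\Gamma$, $C^{j+1}(\Gamma)=[\Gamma,C^j(\Gamma)]$. For a topological group $G$, $\overline{C^1}(G)=G$ and $\overline{C^{j+1}}(G)$ is the closure of the subgroup generated by commutators $[g,c]$ with $g\in G$, $c\in\overline{C^j}(G)$. *)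

From Stdlib Require Import Reals.


Record Group := {
  gT :> Type;
  mul : gT -> gT -> gT;
  inv : gT -> gT;
  one : gT;
  mulA : forall x y z, mul x (mul y z) = mul (mul x y) z;
  mul1g : forall x, mul one x = x;
  mulg1 : forall x, mul x one = x;
  mulVg : forall x, mul (inv x) x = one;
  mulgV : forall x, mul x (inv x) = one }.

(** A group presented on a carrier with an equivalence relation (a "setoid
    group"); the group it denotes is the carrier modulo [geq]. Used for
    quotient groups and for the inverse limit. *)
Record GSig := {
  car : Type;
  geq : car -> car -> Prop;
  smul : car -> car -> car;
  sinv : car -> car;
  sone : car }.

Definition sigG (G : Group) : GSig :=
  {| car := gT G; geq := @eq (gT G); smul := @mul G; sinv := @inv G; sone := @one G |}.

Section SigDefs.
Variable Sg : GSig.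
Local Notation "x * y" := (smul Sg x y).
Local Notation "x ^-1" := (sinv Sg x) (at level 3).

Definition subgroup (H : car Sg -> Prop) : Prop :=
  H (sone Sg) /\ (forall x y, H x -> H y -> H (x * y)) /\
  (forall x, H x -> H (x ^-1)) /\ (forall x y, geq Sg x y -> H x -> H y).

Definition normal (N : car Sg -> Prop) : Prop :=
  subgroup N /\ forall g n, N n -> N (g ^-1 * n * g).

Definition gen (A : car Sg -> Prop) : car Sg -> Prop :=
  fun x => forall H, subgroup H -> (forall a, A a -> H a) -> H x.

Definition commg (x y : car Sg) : car Sg := x ^-1 * y ^-1 * x * y.

Definition comms (C : car Sg -> Prop) : car Sg -> Prop :=
  fun x => exists g c, C c /\ x = commg g c.

(** lower central series: lcs 1 = Sg, lcs (j+1) = [Sg, lcs j]; (lcs 0 := Sg too) *)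
Fixpoint lcs (j : nat) : car Sg -> Prop :=
  match j with
  | O => fun _ => True
  | S k => match k with
           | O => fun _ => True
           | _ => gen (comms (lcs k))
           end
  end.

Definition nilpotent : Prop :=
  exists c, forall x, lcs c x -> geq Sg x (sone Sg).

Definition quotient (N : car Sg -> Prop) : GSig :=
  {| car := car Sg; geq := fun x y => N (x * y ^-1);
     smul := smul Sg; sinv := sinv Sg; sone := sone Sg |}.
End SigDefs.

Definition isomorphic (S T : GSig) : Prop :=
  exists f : car S -> car T,
    (forall x y, geq S x y -> geq T (f x) (f y)) /\
    (forall x y, geq T (f (smul S x y)) (smul T (f x) (f y))) /\
    (forall x y, geq T (f x) (f y) -> geq S x y) /\
    (forall z, exists x, geq T (f x) z).

Section ProNil.
Variable G : Group.
Local Notation "x * y" := (mul G x y).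
Local Notation "x ^-1" := (inv G x) (at level 3).

Definition Ni (N : G -> Prop) : Prop :=
  normal (sigG G) N /\ nilpotent (quotient (sigG G) N).

Lemma inv_uniq (a b : G) : a * b = one G -> a ^-1 = b.
Proof.
  intro h. rewrite <- (mulg1 G (a^-1)), <- h, (mulA G), (mulVg G), (mul1g G).
  reflexivity.
Qed.

Lemma invM (x y : G) : (x * y) ^-1 = y ^-1 * x ^-1.
Proof.
  apply inv_uniq. rewrite !(mulA G).
  rewrite <- (mulA G x y (y^-1)), (mulgV G), (mulg1 G), (mulgV G). reflexivity.
Qed.

Lemma inv1 : (one G) ^-1 = one G.
Proof. apply inv_uniq. apply mul1g. Qed.

Lemma invK (x : G) : (x ^-1) ^-1 = x.
Proof. apply inv_uniq. apply mulVg. Qed.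

Definition compat (x : (G -> Prop) -> G) : Prop :=
  forall N M, Ni N -> Ni M -> (forall g, N g -> M g) -> M (x N * (x M) ^-1).

Definition PNiT := { x : (G -> Prop) -> G | compat x }.

Lemma compat_mul (x y : PNiT) : compat (fun N => proj1_sig x N * proj1_sig y N).
Proof.
  destruct x as [x hx], y as [y hy]; intros N M hN hM hNM; simpl.
  pose proof (hx N M hN hM hNM) as ex. pose proof (hy N M hN hM hNM) as ey.
  destruct hM as [[[h1 [hmul [hinv hsat]]] hnorm] _].
  assert (e : (x N * y N) * (x M * y M) ^-1
              = (x N * (x M) ^-1) * (((x M)^-1)^-1 * (y N * (y M)^-1) * (x M)^-1)).
  { rewrite invM, invK, !(mulA G).
    rewrite <- (mulA G (x N) ((x M)^-1) (x M)), (mulVg G), (mulg1 G).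
    reflexivity. }
  rewrite e. apply hmul; [exact ex | apply hnorm; exact ey].
Qed.

Lemma compat_inv (x : PNiT) : compat (fun N => (proj1_sig x N) ^-1).
Proof.
  destruct x as [x hx]; intros N M hN hM hNM; simpl.
  pose proof (hx N M hN hM hNM) as ex.
  destruct hM as [[[h1 [hmul [hinv hsat]]] hnorm] _].
  assert (e : (x N)^-1 * ((x M)^-1)^-1 = (x N)^-1 * (x N * (x M)^-1)^-1 * x N).
  { rewrite invM, !invK, !(mulA G), <- (mulA G _ ((x N)^-1) (x N)), (mulVg G), (mulg1 G). reflexivity. }
  rewrite e. apply hnorm, hinv, ex.
Qed.

Lemma compat_one : compat (fun _ => one G).
Proof.
  intros N M hN hM hNM. destruct hM as [[[h1 _] _] _].
  rewrite inv1, (mulg1 G). exact h1.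
Qed.

(** The inverse limit  P Ni(G) = lim_{N in Ni} G/N, presented as compatible
    families of representatives x_N in G (x_N represents a coset of N),
    two families being equal iff they agree modulo every N in Ni. *)
Definition PNi : GSig :=
  {| car := PNiT;
     geq := fun x y => forall N, Ni N -> N (proj1_sig x N * (proj1_sig y N) ^-1);
     smul := fun x y => exist _ _ (compat_mul x y);
     sinv := fun x => exist _ _ (compat_inv x);
     sone := exist _ _ compat_one |}.

(** Topology of the inverse limit: basic neighbourhoods of x are
    { y | y_N = x_N mod N }, N in Ni (preimages of points of the discrete G/N). *)
Definition PNi_open (U : PNiT -> Prop) : Prop :=
  forall x, U x -> exists N, Ni N /\
    forall y : PNiT, N (proj1_sig y N * (proj1_sig x N) ^-1) -> U y.

Definition PNi_closure (A : PNiT -> Prop) : PNiT -> Prop :=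
  fun x => forall N, Ni N -> exists a, A a /\ N (proj1_sig a N * (proj1_sig x N) ^-1).

Fixpoint clcs (j : nat) : PNiT -> Prop :=
  match j with
  | O => fun _ => True
  | S k => match k with
           | O => fun _ => True
           | _ => PNi_closure (gen PNi (comms PNi (clcs k)))
           end
  end.

(** metrizability: a metric on P Ni(G) (a pseudometric on representatives
    vanishing exactly on the equality of P Ni(G)) inducing its topology *)
Definition PNi_metrizable : Prop :=
  exists d : PNiT -> PNiT -> R,
    (forall x y, (0 <= d x y)%R) /\
    (forall x y, d x y = 0%R <-> geq PNi x y) /\
    (forall x y, d x y = d y x) /\
    (forall x y z, (d x z <= d x y + d y z)%R) /\
    (forall U : PNiT -> Prop,
        PNi_open U <->
        (forall x, U x -> exists eps, (0 < eps)%R /\ forall y, (d x y < eps)%R -> U y)).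
End ProNil.

(* The terms C^k(G) of the lower central series belong to Ni, and every member
   of Ni contains one of them; hence a point x of PNi(G) is determined by its
   coordinates x_k in G/C^k(G), and the sets {y | y_k = x_k} form a basis of
   neighbourhoods of x.  The projection x |-> x_j onto G/C^j(G) is onto
   (constant families) and its kernel is the closure of C^j(PNi(G)): the
   constant family of an element of C^j(G) lies in C^j(PNi(G)), and the
   coordinates of a commutator are commutators of coordinates.  Putting
   d(x, y) = 2^-m for the least m with x_m <> y_m gives an ultrametric whose
   balls are exactly those basic neighbourhoods. *)

From Stdlib Require Import Reals Lra Lia Classical ClassicalEpsilon.

Local Infix "*g" := (mul _) (at level 40, left associativity).
Local Notation "x ^-1" := (inv _ x) (at level 3).
Local Notation "a == b [mod N ]" := (N (a *g b^-1))
  (at level 70, b at next level, format "a  ==  b  [mod  N ]").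

Lemma mulgKV (G : Group) (w x : G) : w *g x^-1 *g x = w.
Proof. rewrite <- mulA, mulVg, mulg1; reflexivity. Qed.

Lemma mulgK (G : Group) (w x : G) : w *g x *g x^-1 = w.
Proof. rewrite <- mulA, mulgV, mulg1; reflexivity. Qed.

Ltac gsimpl := rewrite ?invM, ?invK, ?inv1, ?mulA;
  repeat progress rewrite ?mulgKV, ?mulgK, ?mulVg, ?mulgV, ?mul1g, ?mulg1.

Section Generation.
Variable S : GSig.

Lemma gen_incl (A : car S -> Prop) x : A x -> gen S A x.
Proof. intros hx H _ hA; apply hA, hx. Qed.

Lemma gen_min (A H : car S -> Prop) :
  subgroup S H -> (forall a, A a -> H a) -> forall x, gen S A x -> H x.
Proof. intros hH hA x hx; apply hx; assumption. Qed.

Lemma gen_subgroup (A : car S -> Prop) : subgroup S (gen S A).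
Proof.
  repeat split.
  - intros H [h1 _] _; exact h1.
  - intros x y hx hy H hH hA; pose proof hH as (_ & hM & _).
    apply hM; [apply hx | apply hy]; auto.
  - intros x hx H hH hA; pose proof hH as (_ & _ & hV & _).
    apply hV, hx; auto.
  - intros x y e hx H hH hA; pose proof hH as (_ & _ & _ & hE).
    apply (hE x y e), hx; auto.
Qed.

End Generation.

Section LowerCentralSeries.
Variable G : Group.
Local Notation C := (lcs (sigG G)).
Implicit Types (A H N : G -> Prop) (a b c g x y : G).

Lemma subgroup1 H : subgroup (sigG G) H -> H (one G).
Proof. intros [h _]; exact h. Qed.

Lemma subgroupM H x y : subgroup (sigG G) H -> H x -> H y -> H (x *g y).
Proof. intros (_ & h & _); apply h. Qed.

Lemma subgroupV H x : subgroup (sigG G) H -> H x -> H (x^-1).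
Proof. intros (_ & _ & h & _); apply h. Qed.

Lemma normal_conj N g x : normal (sigG G) N -> N x -> N (g^-1 *g x *g g).
Proof. intros [_ h]; apply h. Qed.

Lemma congr_refl H a : subgroup (sigG G) H -> a == a [mod H].
Proof. intros hH; rewrite mulgV; apply subgroup1, hH. Qed.

Lemma congr_sym H a b : subgroup (sigG G) H -> a == b [mod H] -> b == a [mod H].
Proof.
  intros hH h; replace (b *g a^-1) with ((a *g b^-1)^-1) by (gsimpl; reflexivity).
  apply subgroupV; assumption.
Qed.

Lemma congr_trans H a b c :
  subgroup (sigG G) H -> a == b [mod H] -> b == c [mod H] -> a == c [mod H].
Proof.
  intros hH h1 h2.
  replace (a *g c^-1) with ((a *g b^-1) *g (b *g c^-1)) by (gsimpl; reflexivity).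
  apply subgroupM; assumption.
Qed.

Lemma congr_mem H a b : subgroup (sigG G) H -> a == b [mod H] -> H b -> H a.
Proof.
  intros hH h hb; replace a with ((a *g b^-1) *g b) by (gsimpl; reflexivity).
  apply subgroupM; assumption.
Qed.

Lemma gen_normal A :
  (forall g a, A a -> A (g^-1 *g a *g g)) -> normal (sigG G) (gen (sigG G) A).
Proof.
  intros hA; split; [apply gen_subgroup|].
  pose proof (gen_subgroup (sigG G) A) as hG.
  set (T := fun x => forall g, gen (sigG G) A (g^-1 *g x *g g)).
  assert (hT : subgroup (sigG G) T).
  { repeat split; cbn.
    - intro g; replace (g^-1 *g one G *g g) with (one G) by (gsimpl; reflexivity).
      apply subgroup1, hG.
    - intros x y hx hy g.
      replace (g^-1 *g (x *g y) *g g) with ((g^-1 *g x *g g) *g (g^-1 *g y *g g))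
        by (gsimpl; reflexivity).
      apply subgroupM; auto.
    - intros x hx g.
      replace (g^-1 *g x^-1 *g g) with ((g^-1 *g x *g g)^-1) by (gsimpl; reflexivity).
      apply subgroupV; auto.
    - intros x y <-; auto. }
  intros g x hx; apply (gen_min (sigG G) A T hT); [|exact hx].
  intros a ha h; apply gen_incl, hA, ha.
Qed.

Lemma normal_gen_comms N :
  normal (sigG G) N -> normal (sigG G) (gen (sigG G) (comms (sigG G) N)).
Proof.
  intros hN; apply gen_normal.
  intros g a [u [c [hc ->]]].
  exists (g^-1 *g u *g g), (g^-1 *g c *g g); split; [apply normal_conj; assumption|].
  unfold commg; cbn; gsimpl; reflexivity.
Qed.

Lemma gen_comms_sub N :
  normal (sigG G) N -> forall x, gen (sigG G) (comms (sigG G) N) x -> N x.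
Proof.
  intros hN; apply (gen_min (sigG G)); [apply hN|].
  intros a [g [c [hc ->]]]; unfold commg; cbn.
  apply subgroupM; [apply hN| |exact hc].
  apply normal_conj, subgroupV; [exact hN | apply hN | exact hc].
Qed.

Lemma lcsSS k : C (S (S k)) = gen (sigG G) (comms (sigG G) (C (S k))).
Proof. reflexivity. Qed.

Lemma lcs_normal k : normal (sigG G) (C k).
Proof.
  assert (hT : normal (sigG G) (fun _ => True)) by (repeat split; auto).
  induction k as [|[|k] IH]; [exact hT | exact hT |].
  rewrite lcsSS; apply normal_gen_comms, IH.
Qed.

Lemma lcs_subgroup k : subgroup (sigG G) (C k).
Proof. apply lcs_normal. Qed.

Lemma lcs_mono k l x : (k <= l)%nat -> C l x -> C k x.
Proof.
  induction 1 as [|l _ IH]; [auto|].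
  intros hx; apply IH.
  destruct l as [|[|l]]; [exact I | exact I |].
  apply gen_comms_sub, hx; apply lcs_normal.
Qed.

Lemma subgroup_of_quotient N H : subgroup (quotient (sigG G) N) H -> subgroup (sigG G) H.
Proof. intros (h1 & hM & hV & _); repeat split; auto; intros x y <-; auto. Qed.

Lemma quotient_subgroup N H :
  subgroup (sigG G) H -> (forall x, N x -> H x) -> subgroup (quotient (sigG G) N) H.
Proof.
  intros hH hNH; repeat split; try apply hH.
  intros x y hxy hx; cbn in hxy.
  apply (congr_mem H y x hH); [apply congr_sym, hNH|]; assumption.
Qed.

Lemma lcs_sub_quotient N k x : C k x -> lcs (quotient (sigG G) N) k x.
Proof.
  revert x; induction k as [|[|k] IH]; [intros; exact I | intros; exact I |].
  intros x; rewrite !lcsSS; apply gen_min.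
  - eapply subgroup_of_quotient, gen_subgroup.
  - intros a [g [c [hc ->]]]; apply gen_incl.
    exists g, c; split; [apply IH, hc | reflexivity].
Qed.

Lemma quotient_lcs_sub N k :
  (forall x, N x -> C k x) -> forall x, lcs (quotient (sigG G) N) k x -> C k x.
Proof.
  revert N; induction k as [|[|k] IH]; [intros; exact I | intros; exact I |].
  intros N hN x; rewrite !lcsSS; apply gen_min.
  - apply quotient_subgroup; [apply (lcs_subgroup (S (S k))) | exact hN].
  - intros a [g [c [hc ->]]]; apply gen_incl; exists g, c; split; [|reflexivity].
    apply (IH N); [|exact hc].
    intros y hy; apply (lcs_mono _ (S (S k))); [lia | apply hN, hy].
Qed.

Lemma Ni_lcs j : Ni G (C j).
Proof.
  split; [apply lcs_normal|]; exists j.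
  intros x hx; cbn; rewrite inv1, mulg1.
  apply (quotient_lcs_sub (C j) j); auto.
Qed.

Lemma Ni_lcs_sub N : Ni G N -> exists n, forall x, C n x -> N x.
Proof.
  intros [_ [n hn]]; exists n; intros x hx.
  pose proof (hn x (lcs_sub_quotient N n x hx)) as h; cbn in h.
  rewrite inv1, mulg1 in h; exact h.
Qed.

End LowerCentralSeries.

Section LevelMetric.
Variable T : Type.
Variable E : nat -> T -> T -> Prop.
Hypothesis E_sym : forall k x y, E k x y -> E k y x.
Hypothesis E_trans : forall k x y z, E k x y -> E k y z -> E k x z.
Hypothesis E_antitone : forall k l x y, (k <= l)%nat -> E l x y -> E k x y.

Definition first_split (x y : T) (m : nat) : Prop :=
  ~ E m x y /\ forall k, (k < m)%nat -> E k x y.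

Lemma first_split_exists x y k : ~ E k x y -> exists m, first_split x y m.
Proof.
  induction k as [k IH] using (well_founded_induction Wf_nat.lt_wf); intros hk.
  destruct (classic (exists l, (l < k)%nat /\ ~ E l x y)) as [[l [hl nl]] | h].
  - exact (IH l hl nl).
  - exists k; split; [exact hk|].
    intros l hl; apply NNPP; intros nl; apply h; exists l; auto.
Qed.

Lemma first_split_unique x y m m' : first_split x y m -> first_split x y m' -> m = m'.
Proof.
  intros [h1 h2] [h1' h2'].
  destruct (Nat.lt_trichotomy m m') as [l | [e | l]]; auto.
  - exfalso; apply h1, h2', l.
  - exfalso; apply h1', h2, l.
Qed.

Definition level_dist (x y : T) : R :=
  match excluded_middle_informative (exists k, ~ E k x y) with
  | left h =>
      let (k, hk) := constructive_indefinite_description _ h in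
      / 2 ^ proj1_sig (constructive_indefinite_description _ (first_split_exists x y k hk))
  | right _ => 0
  end.

Lemma level_dist_spec x y :
  ((forall k, E k x y) /\ level_dist x y = 0%R) \/
  (exists m, first_split x y m /\ level_dist x y = (/ 2 ^ m)%R).
Proof.
  unfold level_dist; destruct (excluded_middle_informative _) as [h | h].
  - right; destruct (constructive_indefinite_description _ h) as [k hk].
    destruct (constructive_indefinite_description _ _) as [m hm]; exists m; auto.
  - left; split; [|reflexivity].
    intros k; apply NNPP; intros hk; apply h; exists k; exact hk.
Qed.

Lemma inv_pow2_pos m : (0 < / 2 ^ m)%R.
Proof. apply Rinv_0_lt_compat, pow_lt; lra. Qed.

Lemma inv_pow2_le m n : (m <= n)%nat -> (/ 2 ^ n <= / 2 ^ m)%R.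
Proof.
  intros h; apply Rinv_le_contravar; [apply pow_lt; lra|].
  apply Rle_pow; [lra | exact h].
Qed.

Lemma level_dist_ge0 x y : (0 <= level_dist x y)%R.
Proof.
  destruct (level_dist_spec x y) as [[_ ->] | [m [_ ->]]]; [lra|].
  left; apply inv_pow2_pos.
Qed.

Lemma level_dist_ge x y k : ~ E k x y -> (/ 2 ^ k <= level_dist x y)%R.
Proof.
  intros hk; destruct (level_dist_spec x y) as [[h _] | [m [[_ hm] ->]]].
  - exfalso; apply hk, h.
  - apply inv_pow2_le; destruct (Nat.le_gt_cases m k) as [l | l]; auto.
    exfalso; apply hk, hm, l.
Qed.

Lemma level_dist_le x y k : E k x y -> (level_dist x y <= / 2 ^ S k)%R.
Proof.
  intros hk; destruct (level_dist_spec x y) as [[_ ->] | [m [[hm _] ->]]].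
  - left; apply inv_pow2_pos.
  - apply inv_pow2_le; destruct (Nat.le_gt_cases m k) as [l | l]; [|lia].
    exfalso; apply hm, (E_antitone m k); assumption.
Qed.

Lemma level_dist_lt x y k : (level_dist x y < / 2 ^ k)%R <-> E k x y.
Proof.
  split.
  - intros hd; apply NNPP; intros hk; pose proof (level_dist_ge x y k hk); lra.
  - intros hk; pose proof (level_dist_le x y k hk).
    assert (/ 2 ^ S k < / 2 ^ k)%R; [|lra].
    pose proof (pow_lt 2 k ltac:(lra)).
    apply Rinv_lt_contravar; cbn; nra.
Qed.

Lemma level_dist_eq0 x y : level_dist x y = 0%R <-> forall k, E k x y.
Proof.
  split.
  - intros h0 k; apply (level_dist_lt x y k); rewrite h0; apply inv_pow2_pos.
  - intros h; destruct (level_dist_spec x y) as [[_ e] | [m [[hm _] _]]]; auto.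
    exfalso; apply hm, h.
Qed.

Lemma level_dist_sym x y : level_dist x y = level_dist y x.
Proof.
  assert (hsplit : forall m, first_split x y m -> first_split y x m).
  { intros m [h1 h2]; split; [intros e; apply h1, E_sym, e | intros; apply E_sym, h2; auto]. }
  destruct (level_dist_spec x y) as [[h ->] | [m [hm ->]]].
  - symmetry; apply level_dist_eq0; intros; apply E_sym, h.
  - destruct (level_dist_spec y x) as [[h _] | [m' [hm' ->]]].
    + exfalso; apply (proj1 hm), E_sym, h.
    + rewrite (first_split_unique y x m m'); auto.
Qed.

Lemma level_dist_triangle x y z : (level_dist x z <= level_dist x y + level_dist y z)%R.
Proof.
  pose proof (level_dist_ge0 x y); pose proof (level_dist_ge0 y z).
  destruct (level_dist_spec x z) as [[_ ->] | [m [[hm _] ->]]]; [lra|].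
  destruct (classic (E m x y)) as [exy | nxy].
  - assert (nyz : ~ E m y z) by (intros eyz; apply hm, (E_trans m x y z); assumption).
    pose proof (level_dist_ge y z m nyz); lra.
  - pose proof (level_dist_ge x y m nxy); lra.
Qed.

End LevelMetric.

Lemma inv_pow2_lt eps : (0 < eps)%R -> exists k, (/ 2 ^ k < eps)%R.
Proof.
  intros he; destruct (pow_lt_1_zero (/ 2)) with eps as [k hk];
    [rewrite Rabs_pos_eq; lra | exact he |].
  exists k; specialize (hk k (le_n k)).
  rewrite pow_inv, Rabs_pos_eq in hk; [exact hk|].
  left; apply Rinv_0_lt_compat, pow_lt; lra.
Qed.

Section Completion.
Variable G : Group.
Local Notation C := (lcs (sigG G)).
Local Notation "x .[ N ]" := (proj1_sig x N) (at level 2, format "x .[ N ]").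
Implicit Types (A : PNiT G -> Prop) (H N M : G -> Prop) (g : G) (x y : PNiT G).

Lemma coord_compat x N M :
  Ni G N -> Ni G M -> (forall g, N g -> M g) -> x.[N] == x.[M] [mod M].
Proof. intros; apply (proj2_sig x); assumption. Qed.

Lemma Ni_subgroup N : Ni G N -> subgroup (sigG G) N.
Proof. intros [[h _] _]; exact h. Qed.

Lemma PNi_eq x y : (forall N, x.[N] = y.[N]) -> geq (PNi G) x y.
Proof. intros e N hN; cbn; rewrite e; apply congr_refl, Ni_subgroup, hN. Qed.

Definition agree k x y : Prop := x.[C k] == y.[C k] [mod C k].

Lemma agree_Ni x y N n :
  Ni G N -> (forall g, C n g -> N g) -> agree n x y -> x.[N] == y.[N] [mod N].
Proof.
  intros hN hn h; pose proof (Ni_subgroup N hN) as hS.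
  apply (congr_trans _ N _ x.[C n]); [exact hS | |].
  - apply congr_sym, coord_compat; auto using Ni_lcs.
  - apply (congr_trans _ N _ y.[C n]); [exact hS | apply hn, h |].
    apply coord_compat; auto using Ni_lcs.
Qed.

Lemma agree_sym k x y : agree k x y -> agree k y x.
Proof. apply congr_sym, lcs_subgroup. Qed.

Lemma agree_trans k x y z : agree k x y -> agree k y z -> agree k x z.
Proof. apply congr_trans, lcs_subgroup. Qed.

Lemma agree_antitone k l x y : (k <= l)%nat -> agree l x y -> agree k x y.
Proof.
  intros hkl; apply (agree_Ni x y (C k) l (Ni_lcs G k)).
  intros g; apply lcs_mono, hkl.
Qed.

Lemma geq_PNi_agree x y : geq (PNi G) x y <-> forall k, agree k x y.
Proof.
  split.
  - intros h k; apply (h _ (Ni_lcs G k)).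
  - intros h N hN; destruct (Ni_lcs_sub G N hN) as [n hn].
    apply (agree_Ni x y N n hN hn (h n)).
Qed.

Lemma const_compat g : compat G (fun _ => g).
Proof. intros N M _ hM _; apply congr_refl, Ni_subgroup, hM. Qed.

Definition const g : PNiT G := exist _ (fun _ => g) (const_compat g).

Lemma subgroup_const_preimage A :
  subgroup (PNi G) A -> subgroup (sigG G) (fun g => A (const g)).
Proof.
  intros (h1 & hM & hV & hE); repeat split; cbn.
  - apply (hE (sone (PNi G))); [apply PNi_eq; reflexivity | exact h1].
  - intros g h hg hh; apply (hE (smul (PNi G) (const g) (const h)));
      [apply PNi_eq; reflexivity | apply hM; assumption].
  - intros g hg; apply (hE (sinv (PNi G) (const g)));
      [apply PNi_eq; reflexivity | apply hV; assumption].
  - intros g h <-; auto.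
Qed.

Lemma closure_incl A x : A x -> PNi_closure G A x.
Proof. intros hx N hN; exists x; split; [exact hx | apply congr_refl, Ni_subgroup, hN]. Qed.

Lemma clcsSS k :
  clcs G (S (S k)) = PNi_closure G (gen (PNi G) (comms (PNi G) (clcs G (S k)))).
Proof. reflexivity. Qed.

Definition ker_coord j x : Prop := C j x.[C j].

Lemma subgroup_ker_coord j : subgroup (PNi G) (ker_coord j).
Proof.
  pose proof (lcs_subgroup G j) as hS; unfold ker_coord; repeat split; cbn.
  - apply subgroup1, hS.
  - intros x y hx hy; apply subgroupM; assumption.
  - intros x hx; apply subgroupV; assumption.
  - intros x y e hx; apply (congr_mem _ _ y.[C j] x.[C j] hS); [|exact hx].
    apply congr_sym, (e _ (Ni_lcs G j)); exact hS.
Qed.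

Lemma clcs_ker_coord j x : clcs G j x -> ker_coord j x.
Proof.
  revert x; induction j as [|[|k] IH]; [intros; exact I | intros; exact I |].
  intros x hx; rewrite clcsSS in hx.
  destruct (hx _ (Ni_lcs G (S (S k)))) as [a [ha hax]].
  assert (hKa : ker_coord (S (S k)) a).
  { clear hax; revert a ha; apply (gen_min (PNi G)); [apply subgroup_ker_coord|].
    intros b [g [c [hc ->]]]; unfold ker_coord; rewrite lcsSS; apply gen_incl.
    exists g.[C (S (S k))], c.[C (S (S k))]; split; [|reflexivity].
    apply (congr_mem _ _ _ c.[C (S k)] (lcs_subgroup G _)); [|exact (IH c hc)].
    apply coord_compat; try apply Ni_lcs.
    intros h; apply lcs_mono; lia. }
  apply (congr_mem _ _ _ a.[C (S (S k))] (lcs_subgroup G _)); [|exact hKa].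
  apply congr_sym; [apply lcs_subgroup | exact hax].
Qed.

Lemma clcs_const k g : C k g -> clcs G k (const g).
Proof.
  revert g; induction k as [|[|k] IH]; [intros; exact I | intros; exact I |].
  intros g hg; rewrite clcsSS; apply closure_incl; revert g hg.
  apply (gen_min (sigG G));
    [apply subgroup_const_preimage, gen_subgroup|].
  intros a [u [c [hc ->]]].
  pose proof (gen_subgroup (PNi G) (comms (PNi G) (clcs G (S k)))) as (_ & _ & _ & hE).
  apply (hE (commg (PNi G) (const u) (const c))); [apply PNi_eq; reflexivity|].
  apply gen_incl; exists (const u), (const c); split; [apply IH, hc | reflexivity].
Qed.

Lemma ker_coord_clcs j x : ker_coord j x -> clcs G j x.
Proof.
  destruct j as [|[|k]]; [intros; exact I | intros; exact I |].
  intros hx N hN.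
  destruct (Ni_lcs_sub G N hN) as [n hn].
  set (m := Nat.max n (S (S k))).
  assert (hxm : C (S (S k)) x.[C m]).
  { apply (congr_mem _ _ _ x.[C (S (S k))] (lcs_subgroup G _)); [|exact hx].
    apply coord_compat; try apply Ni_lcs.
    intros g; apply lcs_mono; unfold m; lia. }
  destruct (clcs_const (S (S k)) _ hxm N hN) as [a [ha hax]].
  exists a; split; [exact ha|].
  apply (congr_trans _ _ _ x.[C m] _ (Ni_subgroup N hN)); [exact hax|].
  apply coord_compat; [apply Ni_lcs | exact hN |].
  intros g hg; apply hn, (lcs_mono G n m); [unfold m; lia | exact hg].
Qed.

Lemma PNi_lcs_quotient_iso j :
  isomorphic (quotient (PNi G) (clcs G j)) (quotient (sigG G) (C j)).
Proof.
  pose proof (lcs_subgroup G j) as hS.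
  exists (fun x => x.[C j]); repeat split.
  - intros x y hxy; exact (clcs_ker_coord j _ hxy).
  - intros x y; cbn; apply congr_refl, hS.
  - intros x y hxy; exact (ker_coord_clcs j (smul (PNi G) x (sinv (PNi G) y)) hxy).
  - intros g; exists (const g); cbn; apply congr_refl, hS.
Qed.

Lemma PNi_open_agree U :
  PNi_open G U <-> forall x, U x -> exists k, forall y, agree k y x -> U y.
Proof.
  split; intros hU x hx.
  - destruct (hU x hx) as [N [hN hy]]; destruct (Ni_lcs_sub G N hN) as [n hn].
    exists n; intros y hyx; apply hy, (agree_Ni y x N n hN hn hyx).
  - destruct (hU x hx) as [k hk]; exists (C k); split; [apply Ni_lcs | exact hk].
Qed.

Lemma PNi_level_metrizable : PNi_metrizable G.
Proof.
  pose proof agree_sym as hsym; pose proof agree_trans as htrans.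
  pose proof agree_antitone as hanti.
  exists (level_dist _ agree); repeat split.
  - apply level_dist_ge0.
  - intros h; apply geq_PNi_agree, (level_dist_eq0 _ _ hanti), h.
  - intros h; apply (level_dist_eq0 _ _ hanti), geq_PNi_agree, h.
  - apply level_dist_sym; assumption.
  - apply level_dist_triangle; assumption.
  - intros hU x hx; destruct (proj1 (PNi_open_agree U) hU x hx) as [k hk].
    exists (/ 2 ^ k)%R; split; [apply inv_pow2_pos|].
    intros y hd; apply hk, hsym, (level_dist_lt _ _ hanti), hd.
  - intros hU; apply (PNi_open_agree U); intros x hx.
    destruct (hU x hx) as [eps [he hy]]; destruct (inv_pow2_lt eps he) as [k hk].
    exists k; intros y hyx; apply hy.
    pose proof (proj2 (level_dist_lt _ _ hanti x y k) (hsym _ _ _ hyx)); lra.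
Qed.

End Completion.

Theorem mainTheorem2 (G : Group) :
  (forall j : nat, (1 <= j)%nat ->
     isomorphic (quotient (PNi G) (clcs G j)) (quotient (sigG G) (lcs (sigG G) j)))
  /\ PNi_metrizable G.
Proof.
  split; [intros j _; apply PNi_lcs_quotient_iso | apply PNi_level_metrizable].
Qed.
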